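(* Let $I$ be a set, $\mathcal{E}=(E_i)_{i\in I}$ a family of nonempty sets, and $R$ a multiple relation in $\mathcal{E}$. Then the set $\mathcal{K}_R$ of subsets of $J_R$ that are not scindable for $R$ is an integral connective structure on $J_R$.
   Context: For $J\subseteq I$ let $Z_J=\prod_{j\in J}E_j$ ($J$-families; $Z_\emptyset=\{\bullet\}$). A multiple relation is a pair $R=(J_R,G_R)$ with $J_R\subseteq I$ and $G_R\subseteq Z_{J_R}$. For $K\subseteq J_R$, $R_{|K}=(K,\{x_{|K}:x\in G_R\})$. Product: $R\bowtie S=(J_R\cup J_S,\{x\in Z_{J_R\cup J_S}: x_{|J_R}\in G_R,\ x_{|J_S}\in G_S\})$. A bipartition of $J$ is a pair $(K,L)$ of nonempty disjoint subsets with union $J$. A relation $T$ is scindable if for some bipartition $(K,L)$ of $J_T$ there are relations $R,S$ with domains $K,L$ and $T=R\bowtie S$; a subset $J\subseteq J_R$ is scindable for $R$ if $R_{|J}$ is scindable. A connective structure on $X$ is a set $\mathcal{K}$ of subsets of $X$ such that for every $\mathcal{I}\subseteq\mathcal{K}$ with $\bigcap_{K\in\mathcal{I}}K\neq\emptyset$, $\bigcup_{K\in\mathcal{I}}K\in\mathcal{K}$; it is integral if it contains all singletons. *)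

Section MultipleRelations.
Context {I : Type} (E : I -> Type).

Definition family (J : I -> Prop) : Type := forall j : {i : I | J i}, E (proj1_sig j).

(* A multiple relation R = (J_R, G_R) with G_R a subset of Z_{J_R}. *)
Record mrel : Type := MRel {
  mdom : I -> Prop;
  mgraph : family mdom -> Prop }.

Definition subset (A B : I -> Prop) : Prop := forall i, A i -> B i.

Definition restr_fam (J K : I -> Prop) (H : subset K J) (x : family J) : family K :=
  fun j => x (exist _ (proj1_sig j) (H _ (proj2_sig j))).

Definition restr (R : mrel) (K : I -> Prop) (H : subset K (mdom R)) : mrel :=
  @MRel K (fun y => exists x, mgraph R x /\ @restr_fam (mdom R) K H x = y).

Definition union (A B : I -> Prop) : I -> Prop := fun i => A i \/ B i.

Lemma subset_unionl (A B : I -> Prop) : subset A (union A B).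
Proof. intros i h; left; exact h. Qed.
Lemma subset_unionr (A B : I -> Prop) : subset B (union A B).
Proof. intros i h; right; exact h. Qed.

Definition join (R S : mrel) : mrel :=
  @MRel (union (mdom R) (mdom S))
    (fun x => mgraph R (@restr_fam _ _ (@subset_unionl (mdom R) (mdom S)) x)
           /\ mgraph S (@restr_fam _ _ (@subset_unionr (mdom R) (mdom S)) x)).

Definition bipartition (J K L : I -> Prop) : Prop :=
  (exists i, K i) /\ (exists i, L i) /\ (forall i, ~ (K i /\ L i)) /\
  (forall i, J i <-> K i \/ L i).

Definition scindable (T : mrel) : Prop :=
  exists R S : mrel, bipartition (mdom T) (mdom R) (mdom S) /\ T = join R S.

Definition not_scindable_subsets (R : mrel) : (I -> Prop) -> Prop :=
  fun J => exists H : subset J (mdom R), ~ scindable (@restr R J H).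

End MultipleRelations.

Definition connective_structure {X0 : Type} (X : X0 -> Prop)
  (K : (X0 -> Prop) -> Prop) : Prop :=
  (forall A, K A -> subset A X) /\
  (forall F : (X0 -> Prop) -> Prop,
      (forall A, F A -> K A) ->
      (exists x, X x /\ forall A, F A -> A x) ->
      K (fun x => exists A, F A /\ A x)).

Definition integral_connective_structure {X0 : Type} (X : X0 -> Prop)
  (K : (X0 -> Prop) -> Prop) : Prop :=
  connective_structure X K /\ (forall x, X x -> K (fun y => y = x)).

(* If R_{|U} = S ⋈ T splits along a bipartition (K, L) of U, then every subset
   A of U meeting both K and L splits too: R_{|A} = S_{|A∩K} ⋈ T_{|A∩L}.
   Hence a non-scindable subset of U lies on one side of the splitting, and a
   family of non-scindable subsets sharing a point cannot cover both sides of a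
   bipartition of its union.  Singletons admit no bipartition at all. *)
From Stdlib Require Import FunctionalExtensionality PropExtensionality
  ProofIrrelevance ClassicalEpsilon.

Arguments mdom {I E}. Arguments mgraph {I E}. Arguments restr {I E} R {K} H.
Arguments restr_fam {I E J K} H x j. Arguments join {I E}. Arguments scindable {I E}.
Arguments not_scindable_subsets {I E}.

Section MultipleRelations.
Context {I : Type} {E : I -> Type}.

Definition inter (A B : I -> Prop) : I -> Prop := fun i => A i /\ B i.

Lemma subset_interr (A B : I -> Prop) : subset (inter A B) B.
Proof. intros i [_ h]; exact h. Qed.

Lemma family_ext (J : I -> Prop) (x y : family E J) :
  (forall i h, x (exist _ i h) = y (exist _ i h)) -> x = y.
Proof. intro H. apply functional_extensionality_dep. intros [i h]. apply H. Qed.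

Lemma family_irrel (J : I -> Prop) (x : family E J) i p q :
  x (exist _ i p) = x (exist _ i q).
Proof. rewrite (proof_irrelevance _ p q). reflexivity. Qed.

Lemma mrel_ext (M N : mrel E) :
  (forall i, mdom M i <-> mdom N i) ->
  (forall (x : family E (mdom M)) (y : family E (mdom N)),
      (forall i h1 h2, x (exist _ i h1) = y (exist _ i h2)) ->
      (mgraph M x <-> mgraph N y)) -> M = N.
Proof.
  destruct M as [D G], N as [D' G']; simpl; intros Hdom Hgraph.
  assert (D = D') as <-.
  { apply functional_extensionality; intro i.
    apply propositional_extensionality, Hdom. }
  f_equal. apply functional_extensionality; intro x.
  apply propositional_extensionality, Hgraph. intros; apply family_irrel.
Qed.

Lemma restr_congr (M N : mrel E) (A : I -> Prop)
  (HM : subset A (mdom M)) (HN : subset A (mdom N)) :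
  M = N -> restr M HM = restr N HN.
Proof. intros <-. rewrite (proof_irrelevance _ HM HN). reflexivity. Qed.

Lemma restr_restr (R : mrel E) {U A : I -> Prop} (HU : subset U (mdom R))
  (HAU : subset A U) (HA : subset A (mdom R)) :
  restr (restr R HU) (K := A) HAU = restr R HA.
Proof.
  apply mrel_ext; [tauto|]. simpl. intros x y Hxy.
  assert (x = y) as <- by (apply family_ext; intros; apply Hxy).
  split.
  - intros [u [[r [Hr <-]] <-]]. exists r. split; [exact Hr|].
    apply family_ext. intros. unfold restr_fam; simpl. apply family_irrel.
  - intros [r [Hr <-]]. exists (restr_fam HU r). split.
    + exists r. split; [exact Hr | reflexivity].
    + apply family_ext. intros. unfold restr_fam; simpl. apply family_irrel.
Qed.

Section RestrJoin.
Variables (S T : mrel E).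
Hypothesis disjoint_dom : forall i, ~ (mdom S i /\ mdom T i).

Lemma restr_join (A : I -> Prop) (HA : subset A (mdom (join S T))) :
  restr (join S T) HA
  = join (restr S (subset_interr A (mdom S))) (restr T (subset_interr A (mdom T))).
Proof.
  apply mrel_ext.
  { simpl. unfold union, inter. intro i. split; [|tauto].
    intro a. destruct (HA i a); tauto. }
  simpl. intros x y Hxy. split.
  - intros [w [[HwS HwT] <-]]. split.
    + eexists. split; [exact HwS|]. apply family_ext. intros i [a h].
      unfold restr_fam; simpl. rewrite <- Hxy with (h1 := a). apply family_irrel.
    + eexists. split; [exact HwT|]. apply family_ext. intros i [a h].
      unfold restr_fam; simpl. rewrite <- Hxy with (h1 := a). apply family_irrel.
  - intros [[s [Hs Hsy]] [t [Ht Hty]]].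
    assert (in_y : forall i, A i -> union (mdom S) (mdom T) i ->
              union (inter A (mdom S)) (inter A (mdom T)) i)
      by (unfold union, inter; tauto).
    assert (in_T : forall i, union (mdom S) (mdom T) i -> ~ mdom S i -> mdom T i)
      by (unfold union; tauto).
    (* [w] agrees with [y] on [A], with [s] on [J_S], with [t] on [J_T]; these
       prescriptions are compatible because [s] and [t] agree with [y] on [A]. *)
    set (w := fun j : {i | union (mdom S) (mdom T) i} =>
      match excluded_middle_informative (A (proj1_sig j)) with
      | left a => y (exist _ (proj1_sig j) (in_y _ a (proj2_sig j)))
      | right _ =>
        match excluded_middle_informative (mdom S (proj1_sig j)) with
        | left hS => s (exist _ (proj1_sig j) hS)
        | right nS => t (exist _ (proj1_sig j) (in_T _ (proj2_sig j) nS))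
        end
      end : E (proj1_sig j)).
    exists w. split; [split|].
    + replace (restr_fam (subset_unionl _ _) w) with s; [exact Hs|].
      apply family_ext. intros i h. unfold restr_fam, w; simpl.
      destruct (excluded_middle_informative (A i)) as [a|na].
      * rewrite (family_irrel _ s i h (subset_interr _ _ i (conj a h))).
        change (restr_fam (subset_interr A (mdom S)) s (exist _ i (conj a h))
          = y (exist _ i (in_y i a (subset_unionl _ _ i h)))).
        rewrite Hsy. unfold restr_fam; simpl. apply family_irrel.
      * destruct (excluded_middle_informative (mdom S i)); [|contradiction].
        apply family_irrel.
    + replace (restr_fam (subset_unionr _ _) w) with t; [exact Ht|].
      apply family_ext. intros i h. unfold restr_fam, w; simpl.
      destruct (excluded_middle_informative (A i)) as [a|na].
      * rewrite (family_irrel _ t i h (subset_interr _ _ i (conj a h))).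
        change (restr_fam (subset_interr A (mdom T)) t (exist _ i (conj a h))
          = y (exist _ i (in_y i a (subset_unionr _ _ i h)))).
        rewrite Hty. unfold restr_fam; simpl. apply family_irrel.
      * destruct (excluded_middle_informative (mdom S i)) as [hS|];
          [exfalso; exact (disjoint_dom i (conj hS h))|].
        apply family_irrel.
    + apply family_ext. intros i a. unfold restr_fam, w; simpl.
      destruct (excluded_middle_informative (A i)); [|contradiction].
      symmetry. apply Hxy.
Qed.

End RestrJoin.

Lemma scindable_restr_of_split (R : mrel E) {U A : I -> Prop}
  (HU : subset U (mdom R)) (HA : subset A (mdom R)) {S T : mrel E} :
  restr R HU = join S T -> bipartition U (mdom S) (mdom T) -> subset A U ->
  (exists i, A i /\ mdom S i) -> (exists i, A i /\ mdom T i) ->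
  scindable (restr R HA).
Proof.
  intros e [_ [_ [disj cov]]] HAU meetS meetT.
  assert (HAST : subset A (mdom (join S T))) by (intros i a; apply cov, HAU, a).
  exists (restr S (subset_interr A (mdom S))), (restr T (subset_interr A (mdom T))).
  split.
  - split; [exact meetS|]. split; [exact meetT|]. split.
    + intros i [[_ hS] [_ hT]]. exact (disj i (conj hS hT)).
    + intro i. unfold inter. simpl. split; [|tauto].
      intro a. destruct (HAST i a); tauto.
  - rewrite <- (restr_restr R HU HAU HA), (restr_congr (restr R HU) _ _ HAU HAST e).
    apply restr_join, disj.
Qed.

Lemma not_scindable_subsets_subset {R : mrel E} {A : I -> Prop} :
  not_scindable_subsets R A -> subset A (mdom R).
Proof. intros [H _]. exact H. Qed.

Lemma not_scindable_subsets_bigcup (R : mrel E) {F : (I -> Prop) -> Prop} :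
  (forall A, F A -> not_scindable_subsets R A) ->
  (exists x, forall A, F A -> A x) ->
  not_scindable_subsets R (fun i => exists A, F A /\ A i).
Proof.
  intros HF [x0 Hx0].
  assert (HU : subset (fun i => exists A, F A /\ A i) (mdom R)).
  { intros i [A [FA Ai]]. exact (not_scindable_subsets_subset (HF A FA) i Ai). }
  exists HU. intros [S [T [bip e]]].
  assert (member_splits : forall A, F A -> (exists i, A i /\ mdom S i) ->
            (exists i, A i /\ mdom T i) -> False).
  { intros A FA meetS meetT. destruct (HF A FA) as [HA NS].
    apply NS, (scindable_restr_of_split R HU HA e bip); [|exact meetS|exact meetT].
    intros i a. exists A. auto. }
  destruct bip as [[k hk] [[l hl] [_ cov]]].
  destruct (proj2 (cov k) (or_introl hk)) as [Ak [FAk Akk]].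
  destruct (proj2 (cov l) (or_intror hl)) as [Al [FAl All]].
  destruct (proj1 (cov x0) (ex_intro _ Ak (conj FAk (Hx0 Ak FAk)))) as [hS|hT].
  - exact (member_splits Al FAl (ex_intro _ x0 (conj (Hx0 Al FAl) hS))
                                (ex_intro _ l (conj All hl))).
  - exact (member_splits Ak FAk (ex_intro _ k (conj Akk hk))
                                (ex_intro _ x0 (conj (Hx0 Ak FAk) hT))).
Qed.

Lemma bipartition_singleton {x : I} {K L : I -> Prop} :
  ~ bipartition (fun y => y = x) K L.
Proof.
  intros [[k hk] [[l hl] [disj cov]]].
  assert (k = x) as -> by (apply cov; auto).
  assert (l = x) as -> by (apply cov; auto).
  exact (disj x (conj hk hl)).
Qed.

Lemma not_scindable_subsets_singleton (R : mrel E) (x : I) :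
  mdom R x -> not_scindable_subsets R (fun y => y = x).
Proof.
  intro Rx. assert (H : subset (fun y => y = x) (mdom R)) by (intros i ->; exact Rx).
  exists H. intros [S [T [bip _]]]. exact (bipartition_singleton bip).
Qed.

End MultipleRelations.

(* The argument does not use that the sets [E i] are nonempty. *)
Theorem mainTheorem2 (I : Type) (E : I -> Type)
  (Hne : forall i, inhabited (E i)) (R : mrel E) :
  integral_connective_structure (@mdom I E R) (@not_scindable_subsets I E R).
Proof.
  split; [split|].
  - exact (@not_scindable_subsets_subset _ _ R).
  - intros F HF [x [_ Hx]]. exact (not_scindable_subsets_bigcup R HF (ex_intro _ x Hx)).
  - exact (not_scindable_subsets_singleton R).
Qed.
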